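(* In the model described in the context, define for $x\in(0,\tfrac12)$ $$\alpha_x^*=\frac{\kappa_x[s^*(x)]}{\kappa_x[s^*(x)]+1},$$ and for $x\in(\tfrac12,1)$ $$\alpha_x^*=\frac{\kappa_x[s^*(x)]+1}{\kappa_x[s^*(x)]},$$ where $\kappa_x(s)=\dfrac{xF_0(s)-(1-x)F_1(s)}{1-2x}$. Then $\alpha_x^*$ is increasing in $x$ on $(0,\tfrac12)$ and decreasing in $x$ on $(\tfrac12,1)$.
   Context: Model. In state $\theta\in\{0,1\}$ a voter's informative signal $s\in\mathbb{R}$ is drawn from a cdf $F_\theta$ with density $f_\theta$ having full support on $\mathbb{R}$, where $f_0(0)=f_1(0)$ and the likelihood ratio $m(s)=f_1(s)/f_0(s)$ is strictly increasing in $s$. For $x\in(0,1)$ let $s^*(x)=m^{-1}\!\left(\frac{x}{1-x}\right)$. (In the paper's model, $\alpha_x^*$ is the sender-optimal mass of trolls targeting voters of type $x$: the probability that such a voter observes a message from a troll farm instead of her informative signal.) *)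

From HB Require Import structures.
From mathcomp Require Import all_boot all_order all_algebra.
From mathcomp Require Import all_classical all_reals all_analysis.
Set Implicit Arguments. Unset Strict Implicit. Unset Printing Implicit Defensive.
Import Order.TTheory GRing.Theory Num.Theory.
Import numFieldNormedType.Exports.
Local Open Scope classical_set_scope.
Local Open Scope ring_scope.

(* A probability density on R: measurable, integrates to 1 w.r.t. Lebesgue
   measure; "full support on R" is read as strict positivity everywhere. *)
Definition full_support_density (R : realType) (f : R -> R) : Prop :=
  [/\ measurable_fun setT f,
      (forall s, 0 < f s) &
      (\int[@lebesgue_measure R]_(t in setT) (f t)%:E = 1)%E].

Definition dens_cdf (R : realType) (f : R -> R) (s : R) : R :=
  fine (\int[@lebesgue_measure R]_(t in `]-oo, s]) (f t)%:E).

Definition kappa (R : realType) (F0 F1 : R -> R) (x s : R) : R :=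
  (x * F0 s - (1 - x) * F1 s) / (1 - 2 * x).

Definition alpha_low (R : realType) (F0 F1 sstar : R -> R) (x : R) : R :=
  kappa F0 F1 x (sstar x) / (kappa F0 F1 x (sstar x) + 1).

Definition alpha_high (R : realType) (F0 F1 sstar : R -> R) (x : R) : R :=
  (kappa F0 F1 x (sstar x) + 1) / kappa F0 F1 x (sstar x).

From Pilot Require Import Defs.
From HB Require Import structures.
From mathcomp Require Import all_boot all_order all_algebra.
From mathcomp Require Import all_classical all_reals all_analysis.
From mathcomp Require Import measurable_realfun ring lra.
(* Write G_x(s) = x F0(s) - (1 - x) F1(s), so that kappa_x(s) = G_x(s) / (1 - 2x).
   Since the likelihood ratio is increasing, x f0 - (1 - x) f1 changes sign once,
   at s*(x), so s*(x) maximises G_x; and since the ratio equals 1 at 0, F1 < F0.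
   For fixed s, d/dx kappa_x(s) = (F0(s) - F1(s)) / (1 - 2x)^2 > 0.  On (0, 1/2)
   the denominator is positive, so kappa_x(s*(x)) = max_s kappa_x(s) is
   increasing in x and exceeds kappa_0 = -F1 > -1, where t |-> t / (t + 1) is
   increasing.  On (1/2, 1) it is negative, so kappa_x(s*(x)) = min_s kappa_x(s)
   is increasing and below kappa_1 = -F0 < 0, where t |-> (t + 1) / t is
   decreasing. *)

Set Implicit Arguments. Unset Strict Implicit. Unset Printing Implicit Defensive.
Import Order.TTheory GRing.Theory Num.Theory.
Import numFieldNormedType.Exports.
Local Open Scope classical_set_scope.
Local Open Scope ring_scope.

Section density_mass.
Variable R : realType.
Local Notation mu := (@lebesgue_measure R).

Definition dens_mass (f : R -> R) (A : set R) : R :=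
  fine (\int[mu]_(t in A) (f t)%:E).

Lemma dens_cdfE (f : R -> R) (s : R) :
  dens_cdf f s = dens_mass f [set` `]-oo, s]].
Proof. by []. Qed.

Variable f : R -> R.
Hypothesis hf : full_support_density f.

Lemma dens_gt0 (t : R) : 0 < f t.
Proof. by case: hf. Qed.

Lemma dens_ge0 (t : R) : (0 <= (f t)%:E)%E.
Proof. by rewrite lee_fin ltW // dens_gt0. Qed.

Lemma measurable_dens (D : set R) : measurable_fun D (fun t => (f t)%:E).
Proof. by case: hf => mf _ _; apply/measurable_EFinP; apply: measurable_funS mf. Qed.

Lemma integral_dens_itv_gt0 {a b : R} : a < b ->
  (0 < \int[mu]_(t in [set` `]a, b[]) (f t)%:E)%E.
Proof.
move=> ab; rewrite lt0e integral_ge0 ?andbT => [|t _]; last exact: dens_ge0.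
apply/eqP => int0.
(* A zero integral would make f vanish a.e. on ]a, b[, which is not null. *)
have absint0 : (\int[mu]_(t in [set` `]a, b[]) `|(f t)%:E| = 0)%E.
  by rewrite -int0; apply: eq_integral => t _; rewrite gee0_abs ?dens_ge0.
have [N [mN muN0 subN]] :=
  (ae_eq_integral_abs mu (measurable_itv `]a, b[) (@measurable_dens _)).1 absint0.
have : (mu `]a, b[ <= mu N)%E.
  apply: le_measure; rewrite ?inE // => t abt; apply: subN => /= /(_ abt) /eqP.
  by rewrite eqe gt_eqF ?dens_gt0.
by rewrite muN0 lebesgue_measure_itv /= lte_fin ab -EFinD lee_fin subr_le0 leNgt ab.
Qed.

Lemma dens_massE (A : set R) : measurable A ->
  (\int[mu]_(t in A) (f t)%:E)%E = (dens_mass f A)%:E.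
Proof.
move=> mA; rewrite fineK // ge0_fin_numE ?integral_ge0 // => [|t _]; last exact: dens_ge0.
case: hf => _ _ intT1; apply: (le_lt_trans _ (ltry 1)); rewrite -intT1.
by apply: ge0_subset_integral => //; [exact: measurable_dens|move=> t _; exact: dens_ge0].
Qed.

Lemma dens_massT : dens_mass f setT = 1.
Proof. by case: hf => _ _ intT1; rewrite /dens_mass intT1. Qed.

Lemma dens_massU (A B : set R) : measurable A -> measurable B ->
  [disjoint A & B] -> dens_mass f (A `|` B) = dens_mass f A + dens_mass f B.
Proof.
move=> mA mB AB; apply: EFin_inj; rewrite EFinD -!dens_massE //; last exact: measurableU.
by rewrite ge0_integral_setU //; [exact: measurable_dens|move=> t _; exact: dens_ge0].
Qed.

Lemma dens_mass_gt0 (A : set R) (a b : R) : measurable A -> a < b ->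
  [set` `]a, b[] `<=` A -> 0 < dens_mass f A.
Proof.
move=> mA ab abA; rewrite -lte_fin -dens_massE //.
apply: lt_le_trans (integral_dens_itv_gt0 ab) _.
by apply: ge0_subset_integral => //; [exact: measurable_dens|move=> t _; exact: dens_ge0].
Qed.

Lemma dens_cdfD (a b : R) : a <= b ->
  dens_cdf f b = dens_cdf f a + dens_mass f [set` `]a, b]].
Proof.
move=> ab; rewrite !dens_cdfE -dens_massU //; last first.
  by apply: lt_disjoint => u v; rewrite !in_itv /= => ua /andP[av _]; exact: le_lt_trans av.
by rewrite -itv_bndbnd_setU // bnd_simp.
Qed.

Lemma dens_cdf_compl (s : R) : dens_cdf f s + dens_mass f [set` `]s, +oo[] = 1.
Proof.
rewrite dens_cdfE -dens_massU //; last exact: disjoint_rays.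
by rewrite -(setCitvl (BRight s)) setUv dens_massT.
Qed.

Lemma dens_cdf_gt0 (s : R) : 0 < dens_cdf f s.
Proof.
rewrite dens_cdfE; apply: (@dens_mass_gt0 _ (s - 1) s) => //; first lra.
by move=> t /=; rewrite !in_itv /= => /andP[_ /ltW].
Qed.

Lemma dens_cdf_lt1 (s : R) : dens_cdf f s < 1.
Proof.
rewrite -(dens_cdf_compl s) ltrDl; apply: (@dens_mass_gt0 _ s (s + 1)) => //; first lra.
by move=> t /=; rewrite !in_itv /= andbT => /andP[].
Qed.

End density_mass.

Section density_comparison.
Variables (R : realType) (f g : R -> R).
Hypotheses (hf : full_support_density f) (hg : full_support_density g).

Lemma dens_mass_le (a b : R) (A : set R) : measurable A -> 0 <= a -> 0 <= b ->
  (forall t, A t -> a * g t <= b * f t) -> a * dens_mass g A <= b * dens_mass f A.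
Proof.
move=> mA a0 b0 gf; rewrite -lee_fin !EFinM -!dens_massE // -!ge0_integralZl_EFin //;
  try exact: measurable_dens; try by move=> t _; exact: dens_ge0.
apply: ge0_le_integral => // [t _||].
- by rewrite -EFinM lee_fin mulr_ge0 // ltW // (dens_gt0 hg).
- by apply: measurable_funeM; exact: measurable_dens.
- by apply: measurable_funeM; exact: measurable_dens.
Qed.

Lemma dens_mass_lt (a b : R) (A B : set R) : measurable A -> measurable B ->
  B `<=` A -> 0 <= b < a -> (forall t, A t -> g t <= f t) ->
  (forall t, B t -> a * g t <= b * f t) -> 0 < dens_mass f B ->
  dens_mass g A < dens_mass f A.
Proof.
move=> mA mB BA /andP[b0 ba] gfA gfB fB0.
have mAB : measurable (A `\` B) by exact: measurableD.
have AB : [disjoint B & A `\` B] by apply/disj_setPS => t [Bt []].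
have a0 : 0 < a by exact: le_lt_trans ba.
have ltB : dens_mass g B < dens_mass f B.
  rewrite -(ltr_pM2l a0); apply: (@le_lt_trans _ _ (b * dens_mass f B)).
    by apply: dens_mass_le => //; exact: ltW.
  by rewrite ltr_pM2r.
have leAB : dens_mass g (A `\` B) <= dens_mass f (A `\` B).
  rewrite -[X in X <= _]mul1r -[X in _ <= X]mul1r.
  by apply: dens_mass_le => // t [At _]; rewrite !mul1r gfA.
by rewrite -(setDUK BA) !dens_massU // ltr_leD.
Qed.

End density_comparison.

Lemma dens_cdf_diff_le_crossing (R : realType) (f g : R -> R) (a b c s : R) :
  full_support_density f -> full_support_density g -> 0 <= a -> 0 <= b ->
  (forall t, t <= c -> b * g t <= a * f t) ->
  (forall t, c <= t -> a * f t <= b * g t) ->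
  a * dens_cdf f s - b * dens_cdf g s <= a * dens_cdf f c - b * dens_cdf g c.
Proof.
move=> hf hg a0 b0 below above; have [sc|cs] := leP s c.
- rewrite (dens_cdfD hf sc) (dens_cdfD hg sc).
  have : b * dens_mass g [set` `]s, c]] <= a * dens_mass f [set` `]s, c]].
    by apply: (dens_mass_le hf hg) => // t; rewrite /= in_itv /= => /andP[_ /below].
  lra.
- rewrite (dens_cdfD hf (ltW cs)) (dens_cdfD hg (ltW cs)).
  have : a * dens_mass f [set` `]c, s]] <= b * dens_mass g [set` `]c, s]].
    by apply: (dens_mass_le hg hf) => // t; rewrite /= in_itv /= => /andP[/ltW /above].
  lra.
Qed.

Section likelihood_ratio.
Variables (R : realType) (f0 f1 : R -> R).
Hypotheses (h0 : full_support_density f0) (h1 : full_support_density f1).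
Hypothesis lr_increasing : forall a b : R, a < b -> f1 a / f0 a < f1 b / f0 b.

Lemma lr_le_frac (t a b : R) : 0 < b -> (f1 t / f0 t <= a / b) = (b * f1 t <= a * f0 t).
Proof.
move=> b0; rewrite ler_pdivrMr ?(dens_gt0 h0) // mulrAC ler_pdivlMr //.
by rewrite [b * _]mulrC.
Qed.

Lemma lr_ge_frac (t a b : R) : 0 < b -> (a / b <= f1 t / f0 t) = (a * f0 t <= b * f1 t).
Proof.
move=> b0; rewrite ler_pdivlMr ?(dens_gt0 h0) // mulrAC ler_pdivrMr //.
by rewrite [b * _]mulrC.
Qed.

Lemma lr_le (t u : R) : t <= u -> f1 t / f0 t <= f1 u / f0 u.
Proof. by rewrite le_eqVlt => /predU1P[->|/lr_increasing/ltW]. Qed.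

Lemma dens_cdf_diff_le_cutoff (sstar : R -> R) :
  (forall x, 0 < x < 1 -> f1 (sstar x) / f0 (sstar x) = x / (1 - x)) ->
  forall x s, 0 < x < 1 ->
  x * dens_cdf f0 s - (1 - x) * dens_cdf f1 s <=
  x * dens_cdf f0 (sstar x) - (1 - x) * dens_cdf f1 (sstar x).
Proof.
move=> hs x s x01; have x1 : 0 < 1 - x by lra.
apply: dens_cdf_diff_le_crossing h0 h1 _ _ _ _ => [||t tc|t ct]; try lra.
- by rewrite -lr_le_frac // -hs // lr_le.
- by rewrite -lr_ge_frac // -hs // lr_le.
Qed.

Hypothesis f01 : f0 0 = f1 0.

Lemma lr0 : f1 0 / f0 0 = 1.
Proof. by rewrite -f01 divff // gt_eqF ?(dens_gt0 h0). Qed.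

Lemma dens_lt_neg (t : R) : t < 0 -> f1 t < f0 t.
Proof.
move=> /lr_increasing; rewrite lr0 ltr_pdivrMr ?(dens_gt0 h0) //.
by rewrite mul1r.
Qed.

Lemma dens_lt_pos (t : R) : 0 < t -> f0 t < f1 t.
Proof.
move=> /lr_increasing; rewrite lr0 ltr_pdivlMr ?(dens_gt0 h0) //.
by rewrite mul1r.
Qed.

Lemma dens_le_nonpos (t : R) : t <= 0 -> f1 t <= f0 t.
Proof. by rewrite le_eqVlt => /predU1P[->|/dens_lt_neg/ltW]; rewrite ?f01. Qed.

Lemma dens_le_nonneg (t : R) : 0 <= t -> f0 t <= f1 t.
Proof. by rewrite le_eqVlt => /predU1P[<-|/dens_lt_pos/ltW]; rewrite ?f01. Qed.

(* Strictness comes from the tail beyond s - 1 (resp. s + 1), where the ratio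
   stays bounded away from 1. *)
Lemma dens_cdf_lt_of_lr (s : R) : dens_cdf f1 s < dens_cdf f0 s.
Proof.
have [s0|s0] := leP s 0.
- rewrite !dens_cdfE; apply: (@dens_mass_lt _ _ _ h0 h1 (f0 (s - 1)) (f1 (s - 1))
    _ [set` `]-oo, s - 1]]) => //.
  + by move=> t /=; rewrite !in_itv /= => /le_trans; apply; lra.
  + by rewrite (ltW (dens_gt0 h1 _)) dens_lt_neg //; lra.
  + by move=> t /=; rewrite in_itv /= => ts; apply: dens_le_nonpos; exact: le_trans s0.
  + by move=> t /=; rewrite in_itv /= => ts; rewrite -lr_le_frac ?(dens_gt0 h0) // lr_le.
  + apply: (@dens_mass_gt0 _ _ h0 _ (s - 2) (s - 1)) => //; first lra.
    by move=> t /=; rewrite !in_itv /= => /andP[_ /ltW].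
- suff : dens_mass f0 [set` `]s, +oo[] < dens_mass f1 [set` `]s, +oo[].
    by have := dens_cdf_compl h0 s; have := dens_cdf_compl h1 s; lra.
  apply: (@dens_mass_lt _ _ _ h1 h0 (f1 (s + 1)) (f0 (s + 1)) _ [set` `]s + 1, +oo[]) => //.
  + by move=> t /=; rewrite !in_itv /= !andbT; apply: lt_trans; lra.
  + by rewrite (ltW (dens_gt0 h0 _)) dens_lt_pos //; lra.
  + by move=> t /=; rewrite in_itv /= andbT => st; apply: dens_le_nonneg; lra.
  + move=> t /=; rewrite in_itv /= andbT => st.
    by rewrite -lr_ge_frac ?(dens_gt0 h0) // lr_le // ltW.
  + apply: (@dens_mass_gt0 _ _ h1 _ (s + 1) (s + 2)) => //; first lra.
    by move=> t /=; rewrite !in_itv /= !andbT => /andP[].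
Qed.

End likelihood_ratio.

Lemma ltr_div_addr1 (R : realFieldType) (u v : R) :
  -1 < u -> u < v -> u / (u + 1) < v / (v + 1).
Proof.
move=> u1 uv; rewrite -subr_gt0.
have -> : v / (v + 1) - u / (u + 1) = (v - u) / ((u + 1) * (v + 1)).
  by field; apply/andP; split; apply/eqP; lra.
by apply: divr_gt0; [lra|apply: mulr_gt0; lra].
Qed.

Lemma ltr_addr1_div (R : realFieldType) (u v : R) :
  u < v -> v < 0 -> (v + 1) / v < (u + 1) / u.
Proof.
move=> uv v0; rewrite -subr_gt0.
have -> : (u + 1) / u - (v + 1) / v = (v - u) / (u * v).
  by field; apply/andP; split; apply/eqP; lra.
by apply: divr_gt0; [lra|rewrite nmulr_rgt0; lra].
Qed.

Section kappa.
Variables (R : realType) (F0 F1 sstar : R -> R).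
Hypothesis F1_lt_F0 : forall s, F1 s < F0 s.
Hypothesis sstar_max : forall x s, 0 < x < 1 ->
  x * F0 s - (1 - x) * F1 s <= x * F0 (sstar x) - (1 - x) * F1 (sstar x).

Local Notation kappa := (kappa F0 F1).

Lemma kappa_lt (x y s : R) : x < y -> 0 < (1 - 2 * x) * (1 - 2 * y) ->
  kappa x s < kappa y s.
Proof.
move=> xy D; have nx : 1 - 2 * x != 0 by apply: contraTneq D => ->; rewrite mul0r ltxx.
have ny : 1 - 2 * y != 0 by apply: contraTneq D => ->; rewrite mulr0 ltxx.
rewrite -subr_gt0.
have -> : kappa y s - kappa x s = (y - x) * (F0 s - F1 s) / ((1 - 2 * x) * (1 - 2 * y)).
  by rewrite /Defs.kappa; field; rewrite nx ny.
by rewrite divr_gt0 // mulr_gt0 // subr_gt0 // F1_lt_F0.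
Qed.

Lemma kappa0 (s : R) : kappa 0 s = - F1 s.
Proof. by rewrite /Defs.kappa; field. Qed.

Lemma kappa1 (s : R) : kappa 1 s = - F0 s.
Proof. by rewrite /Defs.kappa; field. Qed.

Lemma kappa_le_sstar (x s : R) : 0 < x < 1 / 2 -> kappa x s <= kappa x (sstar x).
Proof.
move=> x0; rewrite /Defs.kappa ler_pM2r ?invr_gt0; last lra.
by apply: sstar_max; lra.
Qed.

Lemma kappa_sstar_le (x s : R) : 1 / 2 < x < 1 -> kappa x (sstar x) <= kappa x s.
Proof.
move=> x1; rewrite /Defs.kappa ler_nM2r ?invr_lt0; last lra.
by apply: sstar_max; lra.
Qed.

Lemma alpha_low_increasing (x y : R) : (forall s, F1 s < 1) ->
  0 < x -> x < y -> y < 1 / 2 -> alpha_low F0 F1 sstar x < alpha_low F0 F1 sstar y.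
Proof.
move=> F1_lt1 x0 xy y2; apply: ltr_div_addr1.
- have k0x : kappa 0 (sstar x) < kappa x (sstar x) by apply: kappa_lt => //; nra.
  by move: k0x (F1_lt1 (sstar x)); rewrite kappa0; lra.
- apply: lt_le_trans (kappa_le_sstar _ _); last lra.
  by apply: kappa_lt => //; nra.
Qed.

Lemma alpha_high_decreasing (x y : R) : (forall s, 0 < F0 s) ->
  1 / 2 < x -> x < y -> y < 1 -> alpha_high F0 F1 sstar y < alpha_high F0 F1 sstar x.
Proof.
move=> F0_gt0 x2 xy y1; apply: ltr_addr1_div.
- apply: le_lt_trans (kappa_sstar_le (sstar y) _) _; first lra.
  by apply: kappa_lt => //; nra.
- have ky1 : kappa y (sstar y) < kappa 1 (sstar y) by apply: kappa_lt => //; nra.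
  by move: ky1 (F0_gt0 (sstar y)); rewrite kappa1; lra.
Qed.

End kappa.

Theorem corollary1 (R : realType) (f0 f1 sstar : R -> R) :
  full_support_density f0 ->
  full_support_density f1 ->
  f0 0 = f1 0 ->
  (forall a b : R, a < b -> f1 a / f0 a < f1 b / f0 b) ->
  (forall x : R, 0 < x < 1 -> f1 (sstar x) / f0 (sstar x) = x / (1 - x)) ->
  (forall x y : R, 0 < x -> x < y -> y < 1 / 2 ->
     alpha_low (dens_cdf f0) (dens_cdf f1) sstar x < alpha_low (dens_cdf f0) (dens_cdf f1) sstar y) /\
  (forall x y : R, 1 / 2 < x -> x < y -> y < 1 ->
     alpha_high (dens_cdf f0) (dens_cdf f1) sstar y < alpha_high (dens_cdf f0) (dens_cdf f1) sstar x).
Proof.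
move=> h0 h1 f01 lr_increasing hs.
have F1_lt_F0 := dens_cdf_lt_of_lr h0 h1 lr_increasing f01.
have sstar_max := dens_cdf_diff_le_cutoff h0 h1 lr_increasing hs.
split=> x y.
- exact: (alpha_low_increasing F1_lt_F0 sstar_max (dens_cdf_lt1 h1)).
- exact: (alpha_high_decreasing F1_lt_F0 sstar_max (dens_cdf_gt0 h0)).
Qed.
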